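(* For every real number $\alpha$, the space $Z_\alpha$ is Cartesian, i.e. $Z_\alpha$ is isomorphic (via a bijective bounded linear map with bounded inverse) to its Cartesian square $Z_\alpha \oplus Z_\alpha$.
   Context: Fix $\alpha\in\mathbb{R}$ and let $f_\alpha(t):=t^{1+i\alpha}$ for $0\le t<\infty$. For a sequence $x=(\xi_k)\in \ell_2$ (complex-valued) define the sequence $\Omega_\alpha(x)$ by $(\Omega_\alpha(x))_k:=\xi_k f_\alpha\left(\log \frac{\|x\|_2}{|\xi_k|}\right)$ if $\xi_k\neq 0$ and $(\Omega_\alpha(x))_k:=0$ otherwise. Let $Z_\alpha$ be the space of all pairs $(x,y)$ of complex-valued sequences with $x\in\ell_2$ such that $\|(x,y)\|_\alpha:=\|x\|_2+\|y-\Omega_\alpha(x)\|_2<\infty$. (It is known, by Kalton, that $\|\cdot\|_\alpha$ is a quasi-norm on $Z_\alpha$ equivalent to a norm under which $Z_\alpha$ is a complex Banach space.) A Banach space $X$ is called Cartesian if it is isomorphic to $X\oplus X$. *)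

From Stdlib Require Import Reals.
From Coquelicot Require Import Coquelicot.
Open Scope R_scope.

Definition cseq := nat -> C.

Definition cseq_add (x y : cseq) : cseq := fun k => Cplus (x k) (y k).
Definition cseq_sub (x y : cseq) : cseq := fun k => Cminus (x k) (y k).
Definition cseq_scal (a : C) (x : cseq) : cseq := fun k => Cmult a (x k).

Definition in_l2 (x : cseq) : Prop := ex_series (fun k => (Cmod (x k)) ^ 2).

(* ell_2 norm (meaningful when in_l2 x). *)
Definition l2norm (x : cseq) : R := sqrt (Series (fun k => (Cmod (x k)) ^ 2)).

(* f_alpha(t) = t^(1 + i alpha) = t * exp(i alpha ln t) for t > 0, and f_alpha(0) = 0. *)
Definition f_alpha (alpha t : R) : C :=
  if Rlt_dec 0 t then (t * cos (alpha * ln t), t * sin (alpha * ln t)) else RtoC 0.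

Definition Omega (alpha : R) (x : cseq) : cseq := fun k =>
  if Req_EM_T (Cmod (x k)) 0 then RtoC 0
  else Cmult (x k) (f_alpha alpha (ln (l2norm x / Cmod (x k)))).

Definition Zpair := (cseq * cseq)%type.

Definition inZ (alpha : R) (z : Zpair) : Prop :=
  in_l2 (fst z) /\ in_l2 (cseq_sub (snd z) (Omega alpha (fst z))).

Definition Znorm (alpha : R) (z : Zpair) : R :=
  l2norm (fst z) + l2norm (cseq_sub (snd z) (Omega alpha (fst z))).

Definition Zadd (z w : Zpair) : Zpair := (cseq_add (fst z) (fst w), cseq_add (snd z) (snd w)).
Definition Zscal (a : C) (z : Zpair) : Zpair := (cseq_scal a (fst z), cseq_scal a (snd z)).

Definition inZ2 (alpha : R) (p : Zpair * Zpair) : Prop := inZ alpha (fst p) /\ inZ alpha (snd p).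
Definition Z2norm (alpha : R) (p : Zpair * Zpair) : R := Znorm alpha (fst p) + Znorm alpha (snd p).
Definition Z2add (p q : Zpair * Zpair) : Zpair * Zpair := (Zadd (fst p) (fst q), Zadd (snd p) (snd q)).
Definition Z2scal (a : C) (p : Zpair * Zpair) : Zpair * Zpair := (Zscal a (fst p), Zscal a (snd p)).

(* Boundedness is
   w.r.t. the quasi-norms, which are equivalent to the Banach norms (Kalton). *)
Definition Cartesian_Z (alpha : R) : Prop :=
  exists (T : Zpair -> Zpair * Zpair) (S : Zpair * Zpair -> Zpair) (M : R),
    (forall z, inZ alpha z -> inZ2 alpha (T z)) /\
    (forall p, inZ2 alpha p -> inZ alpha (S p)) /\
    (forall a z w, inZ alpha z -> inZ alpha w ->
        T (Zadd (Zscal a z) w) = Z2add (Z2scal a (T z)) (T w)) /\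
    (forall a p q, inZ2 alpha p -> inZ2 alpha q ->
        S (Z2add (Z2scal a p) q) = Zadd (Zscal a (S p)) (S q)) /\
    (forall z, inZ alpha z -> S (T z) = z) /\
    (forall p, inZ2 alpha p -> T (S p) = p) /\
    (forall z, inZ alpha z -> Z2norm alpha (T z) <= M * Znorm alpha z) /\
    (forall p, inZ2 alpha p -> Znorm alpha (S p) <= M * Z2norm alpha p).

From Stdlib Require Import Reals Lra Lia FunctionalExtensionality.
From Coquelicot Require Import Coquelicot.
Open Scope R_scope.

(* The isomorphism splits a pair (x, y) into its even- and odd-indexed
   coordinates; its inverse interleaves.  The only obstruction is that
   Omega_alpha is not coordinatewise: Omega_alpha(x)_k depends on ||x||_2, which
   changes under splitting and merging.  Let Omega^q be Omega_alpha with ||x||_2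
   replaced by a parameter q >= ||x||_2.  Since f_alpha is Lipschitz on [0, oo)
   with constant L, |Omega^p(x)_k - Omega^q(x)_k| <= L |x_k| |ln p - ln q|, so
   ||Omega^p(x) - Omega^q(x)||_2 <= L ||x||_2 |ln p - ln q| <= L |p - q|.  Changing
   the parameter thus costs O(||x||_2), and both maps are bounded for the
   quasi-norms. *)

Definition interleave {T} (u v : nat -> T) (n : nat) : T :=
  if Nat.even n then u (Nat.div2 n) else v (Nat.div2 n).

Definition evens {T} (x : nat -> T) (k : nat) : T := x (2 * k)%nat.
Definition odds {T} (x : nat -> T) (k : nat) : T := x (2 * k + 1)%nat.

Lemma interleave_even {T} (u v : nat -> T) k : interleave u v (2 * k) = u k.
Proof. unfold interleave. now rewrite Nat.even_even, Nat.div2_double. Qed.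

Lemma interleave_odd {T} (u v : nat -> T) k : interleave u v (2 * k + 1) = v k.
Proof. unfold interleave. now rewrite Nat.even_odd, Nat.div2_odd'. Qed.

Lemma evens_interleave {T} (u v : nat -> T) : evens (interleave u v) = u.
Proof. apply functional_extensionality. intros k. apply interleave_even. Qed.

Lemma odds_interleave {T} (u v : nat -> T) : odds (interleave u v) = v.
Proof. apply functional_extensionality. intros k. apply interleave_odd. Qed.

Lemma interleave_evens_odds {T} (x : nat -> T) : interleave (evens x) (odds x) = x.
Proof.
  apply functional_extensionality. intros n.
  destruct (Nat.Even_or_Odd n) as [[k ->] | [k ->]].
  - now rewrite interleave_even.
  - now rewrite interleave_odd.
Qed.

Lemma interleave_map {T U} (f : T -> U) (u v : nat -> T) :
  (fun n => f (interleave u v n)) = interleave (fun k => f (u k)) (fun k => f (v k)).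
Proof.
  apply functional_extensionality. intros n. unfold interleave. now destruct (Nat.even n).
Qed.

Lemma interleave_map2 {T U V} (f : T -> U -> V) (u v : nat -> T) (u' v' : nat -> U) :
  (fun n => f (interleave u v n) (interleave u' v' n))
  = interleave (fun k => f (u k) (u' k)) (fun k => f (v k) (v' k)).
Proof.
  apply functional_extensionality. intros n. unfold interleave. now destruct (Nat.even n).
Qed.

Lemma sum_n_interleave_odd (a b : nat -> R) m :
  sum_n (interleave a b) (2 * m + 1) = sum_n a m + sum_n b m.
Proof.
  induction m as [|m IH].
  - change (2 * 0 + 1)%nat with 1%nat. rewrite sum_Sn, !sum_O. reflexivity.
  - replace (2 * S m + 1)%nat with (S (S (2 * m + 1))) by lia.
    rewrite !sum_Sn, IH.
    replace (S (S (2 * m + 1))) with (2 * S m + 1)%nat by lia.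
    replace (S (2 * m + 1)) with (2 * S m)%nat by lia.
    rewrite interleave_even, interleave_odd.
    change (sum_n a m + sum_n b m + a (S m) + b (S m)
            = sum_n a m + a (S m) + (sum_n b m + b (S m))).
    ring.
Qed.

Lemma sum_n_interleave_S (a b : nat -> R) n :
  sum_n (interleave a b) (S n) = sum_n a (Nat.div2 (S n)) + sum_n b (Nat.div2 n).
Proof.
  destruct (Nat.Even_or_Odd n) as [[m ->] | [m ->]].
  - rewrite Nat.div2_succ_double, Nat.div2_double, <- sum_n_interleave_odd.
    f_equal. lia.
  - rewrite sum_Sn, sum_n_interleave_odd, Nat.div2_odd'.
    replace (S (2 * m + 1)) with (2 * S m)%nat by lia.
    rewrite interleave_even, Nat.div2_double, sum_Sn.
    change (sum_n a m + sum_n b m + a (S m) = sum_n a m + a (S m) + sum_n b m). ring.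
Qed.

Lemma filterlim_div2 : filterlim Nat.div2 eventually eventually.
Proof.
  intros P [N HN]. exists (2 * N)%nat. intros n Hn.
  apply HN, Nat.div2_le_lower_bound. exact Hn.
Qed.

Lemma is_series_interleave (a b : nat -> R) la lb :
  is_series a la -> is_series b lb -> is_series (interleave a b) (la + lb).
Proof.
  intros Ha Hb.
  change (is_lim_seq (sum_n (interleave a b)) (la + lb)).
  apply is_lim_seq_incr_1.
  eapply is_lim_seq_ext; [intros n; symmetry; apply sum_n_interleave_S|].
  apply (is_lim_seq_plus' (fun n => sum_n a (Nat.div2 (S n)))).
  - apply (is_lim_seq_subseq (sum_n a) la (fun n => Nat.div2 (S n))); [|exact Ha].
    intros P HP. apply filterlim_div2 in HP. destruct HP as [N HN].
    exists N. intros n Hn. apply HN. lia.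
  - apply (is_lim_seq_subseq (sum_n b) lb Nat.div2 filterlim_div2 Hb).
Qed.

Lemma is_lim_seq_sum_n_of_interleave (a b : nat -> R) l :
  is_series (interleave a b) l -> is_lim_seq (fun m => sum_n a m + sum_n b m) l.
Proof.
  intros H.
  eapply is_lim_seq_ext; [intros m; apply sum_n_interleave_odd|].
  apply (is_lim_seq_subseq (sum_n (interleave a b)) l (fun m => 2 * m + 1)%nat); [|exact H].
  intros P [N HN]. exists N. intros n Hn. apply HN. lia.
Qed.

Lemma ex_series_le_nonneg (a b : nat -> R) :
  (forall n, 0 <= a n <= b n) -> ex_series b -> ex_series a.
Proof.
  intros Hab. apply (@ex_series_le R_AbsRing R_CompleteNormedModule).
  intros n. change (Rabs (a n) <= b n). rewrite Rabs_pos_eq; apply Hab.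
Qed.

Lemma ex_series_interleave_inv (a b : nat -> R) :
  (forall n, 0 <= a n) -> (forall n, 0 <= b n) ->
  ex_series (interleave a b) -> ex_series a /\ ex_series b.
Proof.
  intros Ha Hb Hab.
  assert (Hzero : forall m, sum_n (fun _ => 0) m = 0).
  { intros m. rewrite sum_n_const. apply Rmult_0_r. }
  split.
  - destruct (ex_series_le_nonneg (interleave a (fun _ => 0)) (interleave a b)) as [l Hl];
      [|exact Hab|].
    { intros n. unfold interleave. destruct (Nat.even n); split; auto with real. }
    exists l. apply is_lim_seq_sum_n_of_interleave in Hl.
    eapply is_lim_seq_ext in Hl; [exact Hl|]. intros m. rewrite Hzero. apply Rplus_0_r.
  - destruct (ex_series_le_nonneg (interleave (fun _ => 0) b) (interleave a b)) as [l Hl];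
      [|exact Hab|].
    { intros n. unfold interleave. destruct (Nat.even n); split; auto with real. }
    exists l. apply is_lim_seq_sum_n_of_interleave in Hl.
    eapply is_lim_seq_ext in Hl; [exact Hl|]. intros m. rewrite Hzero. apply Rplus_0_l.
Qed.

Lemma le_sum_n (a : nat -> R) k : (forall n, 0 <= a n) -> a k <= sum_n a k.
Proof.
  intros Ha. induction k as [|k IH].
  - rewrite sum_O. apply Rle_refl.
  - rewrite sum_Sn. specialize (Ha k). change (a (S k) <= sum_n a k + a (S k)). lra.
Qed.

Lemma sum_n_le_Series (a : nat -> R) k :
  (forall n, 0 <= a n) -> ex_series a -> sum_n a k <= Series a.
Proof.
  intros Ha Hex. apply (is_lim_seq_incr_compare (sum_n a)).
  - exact (Series_correct a Hex).
  - intros n. rewrite sum_Sn. specialize (Ha (S n)). change (sum_n a n <= sum_n a n + a (S n)). lra.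
Qed.

Lemma Rle_of_pow2_le (a b : R) : 0 <= b -> a ^ 2 <= b ^ 2 -> a <= b.
Proof. intros Hb Hab. destruct (Rle_lt_dec a b) as [|Hlt]; [assumption|nra]. Qed.

Lemma Cmod_sq_nonneg (c : C) : 0 <= Cmod c ^ 2.
Proof. apply pow2_ge_0. Qed.

Lemma Cmod_add_sq_le (a b : C) : Cmod (a + b) ^ 2 <= 2 * Cmod a ^ 2 + 2 * Cmod b ^ 2.
Proof.
  pose proof (Cmod_ge_0 a). pose proof (Cmod_ge_0 b).
  apply Rle_trans with ((Cmod a + Cmod b) ^ 2).
  - apply pow_incr. split; [apply Cmod_ge_0|apply Cmod_triangle].
  - pose proof (pow2_ge_0 (Cmod a - Cmod b)). nra.
Qed.

Lemma l2norm_nonneg (x : cseq) : 0 <= l2norm x.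
Proof. apply sqrt_pos. Qed.

Lemma l2norm_sq (x : cseq) : in_l2 x -> l2norm x ^ 2 = Series (fun k => Cmod (x k) ^ 2).
Proof.
  intros Hx. apply pow2_sqrt.
  eapply Rle_trans; [|apply (sum_n_le_Series _ 0 (fun k => Cmod_sq_nonneg (x k)) Hx)].
  rewrite sum_O. apply Cmod_sq_nonneg.
Qed.

Lemma Cmod_le_l2norm (x : cseq) k : in_l2 x -> Cmod (x k) <= l2norm x.
Proof.
  intros Hx. rewrite <- (sqrt_pow2 (Cmod (x k))) by apply Cmod_ge_0.
  assert (Hpos : forall n, 0 <= Cmod (x n) ^ 2) by (intros; apply Cmod_sq_nonneg).
  apply sqrt_le_1_alt. eapply Rle_trans.
  - exact (le_sum_n (fun n => Cmod (x n) ^ 2) k Hpos).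
  - exact (sum_n_le_Series _ k Hpos Hx).
Qed.

Lemma in_l2_le (x : cseq) (g : nat -> R) :
  (forall k, Cmod (x k) ^ 2 <= g k) -> ex_series g ->
  in_l2 x /\ l2norm x ^ 2 <= Series g.
Proof.
  intros Hxg Hg.
  assert (Hx : in_l2 x).
  { apply (ex_series_le_nonneg _ g); [|exact Hg]. intros k. split; auto using Cmod_sq_nonneg. }
  split; [exact Hx|].
  rewrite (l2norm_sq x Hx). apply Series_le; [|exact Hg].
  intros k. split; auto using Cmod_sq_nonneg.
Qed.

Lemma in_l2_dominated (x y : cseq) (c : R) :
  0 <= c -> (forall k, Cmod (x k) <= c * Cmod (y k)) -> in_l2 y ->
  in_l2 x /\ l2norm x <= c * l2norm y.
Proof.
  intros Hc Hxy Hy.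
  destruct (in_l2_le x (fun k => c ^ 2 * Cmod (y k) ^ 2)) as [Hx Hle].
  - intros k. rewrite <- Rpow_mult_distr. apply pow_incr. split; [apply Cmod_ge_0|apply Hxy].
  - exact (ex_series_scal_l _ _ Hy).
  - split; [exact Hx|].
    rewrite Series_scal_l, <- (l2norm_sq y Hy), <- Rpow_mult_distr in Hle.
    apply Rle_of_pow2_le; [|exact Hle].
    apply Rmult_le_pos; [exact Hc|apply l2norm_nonneg].
Qed.

Lemma in_l2_sub_trans (x y z : cseq) :
  in_l2 (cseq_sub x y) -> in_l2 (cseq_sub y z) ->
  in_l2 (cseq_sub x z) /\
  l2norm (cseq_sub x z) <= 2 * (l2norm (cseq_sub x y) + l2norm (cseq_sub y z)).
Proof.
  intros Hxy Hyz.
  assert (Hxy2 : ex_series (fun k => 2 * Cmod (cseq_sub x y k) ^ 2))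
    by exact (ex_series_scal_l 2 _ Hxy).
  assert (Hyz2 : ex_series (fun k => 2 * Cmod (cseq_sub y z k) ^ 2))
    by exact (ex_series_scal_l 2 _ Hyz).
  destruct (in_l2_le (cseq_sub x z)
              (fun k => 2 * Cmod (cseq_sub x y k) ^ 2 + 2 * Cmod (cseq_sub y z k) ^ 2))
    as [Hxz Hle].
  - intros k. unfold cseq_sub.
    replace (x k - z k)%C with ((x k - y k) + (y k - z k))%C by ring.
    apply Cmod_add_sq_le.
  - exact (ex_series_plus _ _ Hxy2 Hyz2).
  - split; [exact Hxz|].
    rewrite (Series_plus _ _ Hxy2 Hyz2), !Series_scal_l,
      <- (l2norm_sq _ Hxy), <- (l2norm_sq _ Hyz) in Hle.
    pose proof (l2norm_nonneg (cseq_sub x y)). pose proof (l2norm_nonneg (cseq_sub y z)).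
    apply Rle_of_pow2_le; nra.
Qed.

Lemma Cmod_sq_interleave (u v : cseq) :
  (fun n => Cmod (interleave u v n) ^ 2)
  = interleave (fun k => Cmod (u k) ^ 2) (fun k => Cmod (v k) ^ 2).
Proof. exact (interleave_map (fun c => Cmod c ^ 2) u v). Qed.

Lemma in_l2_interleave (u v : cseq) : in_l2 (interleave u v) <-> in_l2 u /\ in_l2 v.
Proof.
  unfold in_l2. rewrite Cmod_sq_interleave. split.
  - apply ex_series_interleave_inv; intros; apply Cmod_sq_nonneg.
  - intros [[lu Hu] [lv Hv]]. exists (lu + lv). now apply is_series_interleave.
Qed.

Lemma l2norm_interleave_sq (u v : cseq) :
  in_l2 u -> in_l2 v -> l2norm (interleave u v) ^ 2 = l2norm u ^ 2 + l2norm v ^ 2.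
Proof.
  intros Hu Hv. assert (Huv : in_l2 (interleave u v)) by now apply in_l2_interleave.
  rewrite !l2norm_sq by assumption. rewrite Cmod_sq_interleave.
  apply is_series_unique, is_series_interleave; now apply Series_correct.
Qed.

Lemma l2norm_interleave_bounds (u v : cseq) :
  in_l2 u -> in_l2 v ->
  l2norm u <= l2norm (interleave u v) /\ l2norm v <= l2norm (interleave u v) /\
  l2norm (interleave u v) <= l2norm u + l2norm v.
Proof.
  intros Hu Hv. pose proof (l2norm_interleave_sq u v Hu Hv).
  pose proof (l2norm_nonneg u). pose proof (l2norm_nonneg v).
  pose proof (l2norm_nonneg (interleave u v)).
  repeat split; nra.
Qed.

Lemma in_l2_evens_odds (x : cseq) :
  in_l2 x ->
  in_l2 (evens x) /\ in_l2 (odds x) /\ l2norm (evens x) <= l2norm x /\ l2norm (odds x) <= l2norm x.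
Proof.
  intros Hx. rewrite <- (interleave_evens_odds x) in Hx.
  apply in_l2_interleave in Hx as [He Ho].
  pose proof (l2norm_interleave_bounds _ _ He Ho) as Hb.
  rewrite interleave_evens_odds in Hb. tauto.
Qed.

Lemma ln_div_nonneg (a b : R) : 0 < a <= b -> 0 <= ln (b / a).
Proof.
  intros Hab. rewrite <- ln_1. apply ln_le; [lra|].
  apply (Rmult_le_reg_r a); [lra|].
  unfold Rdiv. rewrite Rmult_assoc, Rinv_l, Rmult_1_r; lra.
Qed.

Definition ext_mul (g : R -> R) (t : R) : R := if Rlt_dec 0 t then t * g t else 0.

Lemma ext_mul_lipschitz (g g' : R -> R) (M s t : R) :
  (forall c, 0 < c -> derivable_pt_lim (fun u => u * g u) c (g' c)) ->
  (forall c, Rabs (g c) <= M) -> (forall c, Rabs (g' c) <= M) ->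
  0 <= s -> 0 <= t -> Rabs (ext_mul g t - ext_mul g s) <= M * Rabs (t - s).
Proof.
  intros Hder Hg Hg' Hs Ht. unfold ext_mul.
  destruct (Rlt_dec 0 t) as [Ht0|Ht0], (Rlt_dec 0 s) as [Hs0|Hs0].
  - destruct (MVT_abs (fun u => u * g u) g' s t) as [c [-> Hc]].
    { intros c Hc. apply Hder.
      apply Rlt_le_trans with (Rmin s t); [now apply Rmin_glb_lt|apply Hc]. }
    apply Rmult_le_compat_r; [apply Rabs_pos|apply Hg'].
  - replace s with 0 by lra. rewrite Rminus_0_r, Rminus_0_r, Rabs_mult, Rmult_comm.
    apply Rmult_le_compat_r; [apply Rabs_pos|apply Hg].
  - replace t with 0 by lra. rewrite Rminus_0_l, Rminus_0_l, !Rabs_Ropp, Rabs_mult, Rmult_comm.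
    apply Rmult_le_compat_r; [apply Rabs_pos|apply Hg].
  - rewrite Rminus_0_r, Rabs_R0. apply Rmult_le_pos; [|apply Rabs_pos].
    eapply Rle_trans; [apply Rabs_pos|apply (Hg 0)].
Qed.

Section Centralizer.

Variable alpha : R.

Definition f_alpha_lip : R := sqrt 2 * (1 + Rabs alpha).

Lemma f_alpha_lip_nonneg : 0 <= f_alpha_lip.
Proof. apply Rmult_le_pos; [apply sqrt_pos|pose proof (Rabs_pos alpha); lra]. Qed.

Lemma f_alpha_components (t : R) :
  f_alpha alpha t
  = (ext_mul (fun u => cos (alpha * ln u)) t, ext_mul (fun u => sin (alpha * ln u)) t).
Proof. unfold f_alpha, ext_mul. now destruct (Rlt_dec 0 t). Qed.

Lemma Rabs_add_scal_le (a b : R) :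
  Rabs a <= 1 -> Rabs b <= 1 -> Rabs (a + alpha * b) <= 1 + Rabs alpha.
Proof.
  intros Ha Hb. eapply Rle_trans; [apply Rabs_triang|]. rewrite Rabs_mult.
  pose proof (Rabs_pos alpha). pose proof (Rabs_pos b). nra.
Qed.

Lemma f_alpha_lipschitz (s t : R) :
  0 <= s -> 0 <= t -> Cmod (f_alpha alpha t - f_alpha alpha s) <= f_alpha_lip * Rabs (t - s).
Proof.
  intros Hs Ht. rewrite !f_alpha_components.
  eapply Rle_trans; [apply Cmod_2Rmax|]. unfold f_alpha_lip. rewrite Rmult_assoc.
  apply Rmult_le_compat_l; [apply sqrt_pos|].
  assert (Hcos : forall u, Rabs (cos u) <= 1) by (intros; apply Rabs_le, COS_bound).
  assert (Hsin : forall u, Rabs (sin u) <= 1) by (intros; apply Rabs_le, SIN_bound).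
  assert (Hle1 : forall a, Rabs a <= 1 -> Rabs a <= 1 + Rabs alpha)
    by (intros; pose proof (Rabs_pos alpha); lra).
  apply Rmax_lub; cbn [fst snd Cminus Cplus Copp].
  - apply (ext_mul_lipschitz _ (fun c => cos (alpha * ln c) + alpha * - sin (alpha * ln c)));
      auto.
    + intros c Hc. apply is_derive_Reals. auto_derive; [lra|field; lra].
    + intros c. apply Rabs_add_scal_le; [|rewrite Rabs_Ropp]; auto.
  - apply (ext_mul_lipschitz _ (fun c => sin (alpha * ln c) + alpha * cos (alpha * ln c)));
      auto.
    + intros c Hc. apply is_derive_Reals. auto_derive; [lra|field; lra].
    + intros c. apply Rabs_add_scal_le; auto.
Qed.

Definition Omega_at (q : R) (x : cseq) : cseq := fun k =>
  if Req_EM_T (Cmod (x k)) 0 then RtoC 0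
  else Cmult (x k) (f_alpha alpha (ln (q / Cmod (x k)))).

Lemma Omega_at_l2norm (x : cseq) : Omega alpha x = Omega_at (l2norm x) x.
Proof. reflexivity. Qed.

Lemma Omega_at_interleave (q : R) (u v : cseq) :
  Omega_at q (interleave u v) = interleave (Omega_at q u) (Omega_at q v).
Proof.
  apply functional_extensionality. intros n. unfold Omega_at, interleave.
  now destruct (Nat.even n).
Qed.

Lemma Cmod_Omega_at_sub (x : cseq) (p q : R) k :
  Cmod (x k) <= p -> Cmod (x k) <= q ->
  Cmod (Omega_at p x k - Omega_at q x k) <= f_alpha_lip * Rabs (ln p - ln q) * Cmod (x k).
Proof.
  intros Hp Hq. unfold Omega_at.
  destruct (Req_EM_T (Cmod (x k)) 0) as [E|E].
  - replace (RtoC 0 - RtoC 0)%C with (RtoC 0) by ring.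
    rewrite E, Rmult_0_r, Cmod_0. apply Rle_refl.
  - pose proof (Cmod_ge_0 (x k)) as Hr. set (r := Cmod (x k)) in *.
    replace (x k * f_alpha alpha (ln (p / r)) - x k * f_alpha alpha (ln (q / r)))%C
      with (x k * (f_alpha alpha (ln (p / r)) - f_alpha alpha (ln (q / r))))%C by ring.
    rewrite Cmod_mult, Rmult_comm.
    apply Rmult_le_compat_r; [exact Hr|].
    eapply Rle_trans; [apply f_alpha_lipschitz; apply ln_div_nonneg; lra|].
    rewrite !ln_div by lra. right. f_equal. f_equal. ring.
Qed.

Lemma mul_Rabs_ln_sub_le (r p q : R) :
  0 <= r -> r <= p -> r <= q -> r * Rabs (ln p - ln q) <= Rabs (p - q).
Proof.
  intros Hr Hp Hq.
  assert (Hkey : forall a b, r <= a <= b -> 0 < r -> r * (ln b - ln a) <= b - a).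
  { intros a b Hab Hr0.
    pose proof (ln_div_nonneg a b ltac:(lra)) as Hba.
    (* ln y <= y - 1 *)
    pose proof (exp_ineq1_le (ln (b / a))) as Hexp.
    rewrite exp_ln in Hexp by (apply Rdiv_lt_0_compat; lra).
    rewrite <- ln_div by lra.
    apply Rle_trans with (a * ln (b / a)); [apply Rmult_le_compat_r; lra|].
    apply Rle_trans with (a * (b / a - 1)); [apply Rmult_le_compat_l; lra|].
    right. field. lra. }
  destruct (Req_dec r 0) as [->|Hr0]; [rewrite Rmult_0_l; apply Rabs_pos|].
  destruct (Rle_dec p q).
  - rewrite Rabs_minus_sym, (Rabs_minus_sym p q), !Rabs_pos_eq; [apply Hkey; lra|lra|].
    apply Rplus_le_reg_r with (ln p). ring_simplify. apply ln_le; lra.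
  - rewrite !Rabs_pos_eq; [apply Hkey; lra|lra|].
    apply Rplus_le_reg_r with (ln q). ring_simplify. apply ln_le; lra.
Qed.

Lemma Omega_at_dist (x : cseq) (p q : R) :
  in_l2 x -> l2norm x <= p -> l2norm x <= q ->
  in_l2 (cseq_sub (Omega_at p x) (Omega_at q x)) /\
  l2norm (cseq_sub (Omega_at p x) (Omega_at q x)) <= f_alpha_lip * Rabs (p - q).
Proof.
  intros Hx Hp Hq.
  destruct (in_l2_dominated (cseq_sub (Omega_at p x) (Omega_at q x)) x
              (f_alpha_lip * Rabs (ln p - ln q))) as [Hin Hle]; auto.
  - apply Rmult_le_pos; [apply f_alpha_lip_nonneg|apply Rabs_pos].
  - intros k. pose proof (Cmod_le_l2norm x k Hx).
    apply Cmod_Omega_at_sub; lra.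
  - split; [exact Hin|]. eapply Rle_trans; [exact Hle|]. rewrite Rmult_assoc.
    apply Rmult_le_compat_l; [apply f_alpha_lip_nonneg|]. rewrite Rmult_comm.
    apply mul_Rabs_ln_sub_le; auto using l2norm_nonneg.
Qed.

Lemma defect_change (x y : cseq) (p q : R) :
  in_l2 x -> l2norm x <= p -> l2norm x <= q -> in_l2 (cseq_sub y (Omega_at p x)) ->
  in_l2 (cseq_sub y (Omega_at q x)) /\
  l2norm (cseq_sub y (Omega_at q x))
    <= 2 * (l2norm (cseq_sub y (Omega_at p x)) + f_alpha_lip * Rabs (p - q)).
Proof.
  intros Hx Hp Hq Hy.
  destruct (Omega_at_dist x p q Hx Hp Hq) as [Hin Hle].
  destruct (in_l2_sub_trans _ _ _ Hy Hin) as [Hyq Hyq_le].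
  split; [exact Hyq|]. lra.
Qed.

End Centralizer.

Definition split_parity (z : Zpair) : Zpair * Zpair :=
  ((evens (fst z), evens (snd z)), (odds (fst z), odds (snd z))).

Definition merge_parity (p : Zpair * Zpair) : Zpair :=
  (interleave (fst (fst p)) (fst (snd p)), interleave (snd (fst p)) (snd (snd p))).

Lemma merge_split_parity (z : Zpair) : merge_parity (split_parity z) = z.
Proof.
  destruct z as [x y]. unfold merge_parity, split_parity; cbn.
  now rewrite !interleave_evens_odds.
Qed.

Lemma split_merge_parity (p : Zpair * Zpair) : split_parity (merge_parity p) = p.
Proof.
  destruct p as [[u y1] [v y2]]. unfold merge_parity, split_parity; cbn.
  now rewrite !evens_interleave, !odds_interleave.
Qed.

Lemma merge_parity_linear (a : C) (p q : Zpair * Zpair) :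
  merge_parity (Z2add (Z2scal a p) q) = Zadd (Zscal a (merge_parity p)) (merge_parity q).
Proof.
  destruct p as [[u1 y1] [v1 w1]], q as [[u2 y2] [v2 w2]].
  unfold merge_parity, Z2add, Z2scal, Zadd, Zscal, cseq_add, cseq_scal; cbn.
  now rewrite !(interleave_map2 (fun c d => Cplus (Cmult a c) d)).
Qed.

Section Bounds.

Variable alpha : R.

Local Notation K := (f_alpha_lip alpha).

Lemma inZ_of_defect_at (u w : cseq) (q : R) :
  in_l2 u -> l2norm u <= q -> in_l2 (cseq_sub w (Omega_at alpha q u)) ->
  inZ alpha (u, w) /\
  Znorm alpha (u, w) <= l2norm u + 2 * (l2norm (cseq_sub w (Omega_at alpha q u)) + K * q).
Proof.
  intros Hu Hq Hw.
  destruct (defect_change alpha u w q (l2norm u) Hu Hq (Rle_refl _) Hw) as [Hin Hle].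
  assert (Rabs (q - l2norm u) <= q) by (pose proof (l2norm_nonneg u); apply Rabs_le; lra).
  assert (K * Rabs (q - l2norm u) <= K * q)
    by (apply Rmult_le_compat_l; [apply f_alpha_lip_nonneg|lra]).
  rewrite <- Omega_at_l2norm in Hin, Hle.
  split; [now split|]. unfold Znorm; cbn [fst snd]. lra.
Qed.

Lemma split_parity_bounded (z : Zpair) :
  inZ alpha z ->
  inZ2 alpha (split_parity z) /\ Z2norm alpha (split_parity z) <= (4 + 4 * K) * Znorm alpha z.
Proof.
  destruct z as [x y]. intros [Hx HD]; cbn [fst snd] in *.
  set (D := cseq_sub y (Omega alpha x)) in *.
  destruct (in_l2_evens_odds x Hx) as (Hxe & Hxo & Nxe & Nxo).
  destruct (in_l2_evens_odds D HD) as (HDe & HDo & NDe & NDo).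
  destruct (inZ_of_defect_at (evens x) (evens y) (l2norm x) Hxe Nxe HDe) as [Ze Ne].
  destruct (inZ_of_defect_at (odds x) (odds y) (l2norm x) Hxo Nxo HDo) as [Zo No].
  split; [now split|].
  unfold Z2norm, split_parity, Znorm in *; cbn [fst snd] in *. fold D.
  change (cseq_sub (evens y) (Omega_at alpha (l2norm x) (evens x))) with (evens D) in Ne.
  change (cseq_sub (odds y) (Omega_at alpha (l2norm x) (odds x))) with (odds D) in No.
  pose proof (f_alpha_lip_nonneg alpha). pose proof (l2norm_nonneg D).
  pose proof (l2norm_nonneg x).
  assert (0 <= K * l2norm D) by (apply Rmult_le_pos; assumption).
  lra.
Qed.

Lemma defect_at_of_inZ (u w : cseq) (q : R) :
  inZ alpha (u, w) -> l2norm u <= q ->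
  in_l2 (cseq_sub w (Omega_at alpha q u)) /\
  l2norm (cseq_sub w (Omega_at alpha q u)) <= 2 * (l2norm (cseq_sub w (Omega alpha u)) + K * q).
Proof.
  intros [Hu Hw] Hq; cbn [fst snd] in *.
  destruct (defect_change alpha u w (l2norm u) q Hu (Rle_refl _) Hq Hw) as [Hin Hle].
  assert (Rabs (l2norm u - q) <= q) by (pose proof (l2norm_nonneg u); apply Rabs_le; lra).
  assert (K * Rabs (l2norm u - q) <= K * q)
    by (apply Rmult_le_compat_l; [apply f_alpha_lip_nonneg|lra]).
  rewrite <- Omega_at_l2norm in Hle.
  split; [exact Hin|lra].
Qed.

Lemma Omega_interleave_defect (u v y1 y2 : cseq) :
  cseq_sub (interleave y1 y2) (Omega alpha (interleave u v))
  = interleave (cseq_sub y1 (Omega_at alpha (l2norm (interleave u v)) u))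
               (cseq_sub y2 (Omega_at alpha (l2norm (interleave u v)) v)).
Proof.
  rewrite Omega_at_l2norm, Omega_at_interleave. exact (interleave_map2 Cminus y1 y2 _ _).
Qed.

Lemma merge_parity_bounded (p : Zpair * Zpair) :
  inZ2 alpha p ->
  inZ alpha (merge_parity p) /\ Znorm alpha (merge_parity p) <= (4 + 4 * K) * Z2norm alpha p.
Proof.
  destruct p as [[u y1] [v y2]]. intros [[Hu HD1] [Hv HD2]]; cbn [fst snd] in *.
  pose proof (proj2 (in_l2_interleave u v) (conj Hu Hv)) as Hx.
  destruct (l2norm_interleave_bounds u v Hu Hv) as (Nu & Nv & Nx).
  destruct (defect_at_of_inZ u y1 _ (conj Hu HD1) Nu) as [HE1 NE1].
  destruct (defect_at_of_inZ v y2 _ (conj Hv HD2) Nv) as [HE2 NE2].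
  pose proof (proj2 (in_l2_interleave _ _) (conj HE1 HE2)) as HE.
  destruct (l2norm_interleave_bounds _ _ HE1 HE2) as (_ & _ & NE).
  unfold inZ, Z2norm, Znorm, merge_parity; cbn [fst snd].
  rewrite Omega_interleave_defect.
  split; [now split|].
  set (q := l2norm (interleave u v)) in *.
  pose proof (l2norm_nonneg (cseq_sub y1 (Omega alpha u))).
  pose proof (l2norm_nonneg (cseq_sub y2 (Omega alpha v))).
  pose proof (f_alpha_lip_nonneg alpha).
  assert (K * q <= K * (l2norm u + l2norm v)) by (apply Rmult_le_compat_l; lra).
  assert (0 <= K * l2norm (cseq_sub y1 (Omega alpha u))) by (apply Rmult_le_pos; assumption).
  assert (0 <= K * l2norm (cseq_sub y2 (Omega alpha v))) by (apply Rmult_le_pos; assumption).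
  lra.
Qed.

End Bounds.

Theorem mainTheorem1 : forall alpha : R, Cartesian_Z alpha.
Proof.
  intros alpha.
  exists split_parity, merge_parity, (4 + 4 * f_alpha_lip alpha).
  split; [intros z Hz; apply (split_parity_bounded alpha z Hz)|].
  split; [intros p Hp; apply (merge_parity_bounded alpha p Hp)|].
  split; [reflexivity|].
  split; [intros; apply merge_parity_linear|].
  split; [intros; apply merge_split_parity|].
  split; [intros; apply split_merge_parity|].
  split; [intros z Hz; apply (split_parity_bounded alpha z Hz)|].
  intros p Hp; apply (merge_parity_bounded alpha p Hp).
Qed.
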